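(* Fix $j\in\{1,\dots,p\}$. Along the Lasso path defined below, the functions $\lambda\mapsto\|z_j(\lambda)\|_2$, $\lambda\mapsto\eta_j(\lambda)$ and $\lambda\mapsto\hat\sigma_j(\lambda)$ are nondecreasing on $(0,\infty)$, and $\tau_j(\lambda)\le 1/\|z_j(\lambda)\|_2$ for every $\lambda>0$. Moreover, if $\hat\gamma_j(\lambda)\neq 0$, then $\eta_j(\lambda)=\lambda n/\|z_j(\lambda)\|_2$.
   Context: $X=(x_1,\dots,x_p)\in\mathbb{R}^{n\times p}$ is a deterministic matrix with columns normalized so that $\|x_j\|_2^2=n$ for all $j$; $X_{-j}$ denotes the $n\times(p-1)$ matrix with columns $x_k$, $k\neq j$. For $\lambda>0$ let $\hat\gamma_j(\lambda)\in\arg\min_{b\in\mathbb{R}^{p-1}}\{\|x_j-X_{-j}b\|_2^2/(2n)+\lambda\|b\|_1\}$ (a Lasso solution; the residual below does not depend on which solution is chosen), $z_j(\lambda)=x_j-X_{-j}\hat\gamma_j(\lambda)$, $\eta_j(\lambda)=\max_{k\neq j}|x_k^Tz_j(\lambda)|/\|z_j(\lambda)\|_2$, $\tau_j(\lambda)=\|z_j(\lambda)\|_2/|x_j^Tz_j(\lambda)|$. Also let $\hat\sigma_j(\lambda)$ be the $\sigma$-component of the minimizer over $(b,\sigma)$, $\sigma\ge 0$, of $\|x_j-X_{-j}b\|_2^2/(2n\sigma)+\sigma/2+\lambda\|b\|_1$ (the scaled Lasso noise-level estimate for regressing $x_j$ on $X_{-j}$). *)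

From HB Require Import structures.
From mathcomp Require Import all_boot all_order all_algebra.
Set Implicit Arguments. Unset Strict Implicit. Unset Printing Implicit Defensive.
Import Order.TTheory GRing.Theory Num.Theory.
Local Open Scope ring_scope.

Section LassoDefs.
Variable R : rcfType.

Definition norm2 (m : nat) (v : 'cV[R]_m) : R :=
  Num.sqrt (\sum_i v i 0 ^+ 2).

Definition sqnorm2 (m : nat) (v : 'cV[R]_m) : R := \sum_i v i 0 ^+ 2.

Definition l1norm (m : nat) (b : 'cV[R]_m) : R := \sum_i `|b i 0|.

Definition dotv (m : nat) (u v : 'cV[R]_m) : R := \sum_i u i 0 * v i 0.

Definition resid (n p : nat) (X : 'M[R]_(n, p)) (j : 'I_p) (b : 'cV[R]_p.-1)
  : 'cV[R]_n := col j X - col' j X *m b.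

Definition lasso_obj (n p : nat) (X : 'M[R]_(n, p)) (j : 'I_p) (lam : R)
  (b : 'cV[R]_p.-1) : R :=
  sqnorm2 (resid X j b) / (2 * n)%:R + lam * l1norm b.

Definition is_lasso_sol (n p : nat) (X : 'M[R]_(n, p)) (j : 'I_p) (lam : R)
  (b : 'cV[R]_p.-1) : Prop :=
  forall b' : 'cV[R]_p.-1, lasso_obj X j lam b <= lasso_obj X j lam b'.

Definition etaj (n p : nat) (X : 'M[R]_(n, p)) (j : 'I_p) (z : 'cV[R]_n) : R :=
  (\big[Num.max/0]_(k < p | k != j) `|dotv (col k X) z|) / norm2 z.

Definition tauj (n p : nat) (X : 'M[R]_(n, p)) (j : 'I_p) (z : 'cV[R]_n) : R :=
  norm2 z / `|dotv (col j X) z|.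

(* Scaled-Lasso objective, defined on admissible pairs (b, sigma) with
   sigma >= 0: for sigma > 0 it is ||r||^2/(2 n sigma) + sigma/2 + lam ||b||_1;
   at sigma = 0 it is the lower semicontinuous extension, i.e. lam ||b||_1 when
   r = 0 (and +infinity, i.e. not admissible, when r <> 0). *)
Definition sl_admissible (n p : nat) (X : 'M[R]_(n, p)) (j : 'I_p)
  (b : 'cV[R]_p.-1) (s : R) : Prop :=
  0 < s \/ (s = 0 /\ resid X j b = 0).

Definition sl_obj (n p : nat) (X : 'M[R]_(n, p)) (j : 'I_p) (lam : R)
  (b : 'cV[R]_p.-1) (s : R) : R :=
  if 0 < s then sqnorm2 (resid X j b) / ((2 * n)%:R * s) + s / 2 + lam * l1norm b
  else lam * l1norm b.

Definition is_scaled_lasso_sol (n p : nat) (X : 'M[R]_(n, p)) (j : 'I_p)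
  (lam : R) (b : 'cV[R]_p.-1) (s : R) : Prop :=
  sl_admissible X j b s /\
  forall (b' : 'cV[R]_p.-1) (s' : R), sl_admissible X j b' s' ->
    sl_obj X j lam b s <= sl_obj X j lam b' s'.

End LassoDefs.

From HB Require Import structures.
From mathcomp Require Import all_boot all_order all_algebra.
From mathcomp Require Import ring lra.
Set Implicit Arguments. Unset Strict Implicit. Unset Printing Implicit Defensive.
Import Order.TTheory GRing.Theory Num.Theory.
Local Open Scope ring_scope.

(* Everything rests on the optimality (KKT) conditions of a Lasso solution b
   with residual z = x_j - X_{-j} b, which we derive directly from the
   minimality of the objective by one-sided perturbations b + t d
   (lemma [lasso_directional]):
     (a) |<x_k, z>| <= lam n for every k <> j, and
     (b) <X_{-j} b, z> = n lam ||b||_1.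
   Consequently max_k |<x_k, z>| = lam n whenever b <> 0, which gives the
   formula for eta_j, and <x_j, z> = ||z||^2 + n lam ||b||_1 >= ||z||^2, which
   gives the bound on tau_j.  For two solutions b1, b2, combining (a) and (b)
   yields <z2 - z1, e1 z2 - e2 z1> <= 0 for suitable weights e_i; with
   Cauchy-Schwarz this compares ||z1|| and ||z2|| (weights e_i = lam_i n) and
   the ratios eta_j (weights e_i = max_k |<x_k, z_i>|).  Finally, profiling the
   scaled Lasso over sigma shows that sigma_hat = ||z|| / sqrt n where b
   minimizes ||z|| / sqrt n + lam ||b||_1, so monotonicity of sigma_hat is an
   exchange argument. *)

Section EuclideanVectors.
Variables (R : rcfType) (m : nat).
Implicit Types (u v w : 'cV[R]_m) (a : R).

Lemma dotvC u v : dotv u v = dotv v u.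
Proof. by apply: eq_bigr => i _; rewrite mulrC. Qed.

Lemma dotvDl u v w : dotv (u + v) w = dotv u w + dotv v w.
Proof. by rewrite /dotv -big_split; apply: eq_bigr => i _; rewrite !mxE mulrDl. Qed.

Lemma dotvZl a u v : dotv (a *: u) v = a * dotv u v.
Proof. by rewrite /dotv mulr_sumr; apply: eq_bigr => i _; rewrite !mxE mulrA. Qed.

Lemma dotvBl u v w : dotv (u - v) w = dotv u w - dotv v w.
Proof. by rewrite dotvDl -scaleN1r dotvZl mulN1r. Qed.

Lemma dotvDr u v w : dotv w (u + v) = dotv w u + dotv w v.
Proof. by rewrite dotvC dotvDl !(dotvC w). Qed.

Lemma dotvBr u v w : dotv w (u - v) = dotv w u - dotv w v.
Proof. by rewrite dotvC dotvBl !(dotvC w). Qed.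

Lemma dotvZr a u v : dotv v (a *: u) = a * dotv v u.
Proof. by rewrite dotvC dotvZl dotvC. Qed.

Lemma dotv0l u : dotv 0 u = 0.
Proof. by rewrite /dotv big1 // => i _; rewrite mxE mul0r. Qed.

Lemma sqnormE u : sqnorm2 u = dotv u u.
Proof. by apply: eq_bigr => i _; rewrite expr2. Qed.

Lemma sqnorm_ge0 u : 0 <= sqnorm2 u.
Proof. by apply: sumr_ge0 => i _; apply: sqr_ge0. Qed.

Lemma sqnorm_eq0 u : sqnorm2 u = 0 -> u = 0.
Proof.
move=> u0; apply/matrixP => i k; rewrite (ord1 k) mxE.
have /eqP := psumr_eq0P (fun i _ => sqr_ge0 (u i 0)) u0 (i := i) isT.
by rewrite sqrf_eq0 => /eqP.
Qed.

Lemma norm2_ge0 u : 0 <= norm2 u.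
Proof. exact: sqrtr_ge0. Qed.

Lemma sqr_norm2 u : norm2 u ^+ 2 = sqnorm2 u.
Proof. exact/sqr_sqrtr/sqnorm_ge0. Qed.

Lemma sqnormB u v a :
  sqnorm2 (u - a *: v) = sqnorm2 u - 2 * a * dotv u v + a ^+ 2 * sqnorm2 v.
Proof. by rewrite !sqnormE dotvBl !dotvBr !dotvZl !dotvZr (dotvC v u); ring. Qed.

(* Cauchy-Schwarz, squared form: expand ||(v.v) u - (u.v) v||^2 >= 0. *)
Lemma cauchy_schwarz_sqr u v : dotv u v ^+ 2 <= sqnorm2 u * sqnorm2 v.
Proof.
have [v0|] := eqVneq v 0.
  by rewrite v0 dotvC dotv0l expr0n mulr_ge0 ?sqnorm_ge0.
move=> /eqP vn0; have vpos : 0 < sqnorm2 v.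
  by rewrite lt_def sqnorm_ge0 andbT; apply/eqP => /sqnorm_eq0.
have := sqnorm_ge0 (sqnorm2 v *: u - dotv u v *: v).
rewrite sqnormB !sqnormE dotvZl dotvZl dotvZr -!sqnormE => expand_ge0.
have : 0 <= sqnorm2 v * (sqnorm2 u * sqnorm2 v - dotv u v ^+ 2) by nra.
by rewrite pmulr_rge0 // subr_ge0.
Qed.

Lemma cauchy_schwarz u v : dotv u v <= norm2 u * norm2 v.
Proof.
rewrite (le_trans (ler_norm _)) // -sqrtr_sqr -sqrtrM ?sqnorm_ge0 //.
by rewrite ler_sqrt ?cauchy_schwarz_sqr // mulr_ge0 ?sqnorm_ge0.
Qed.

(* A weighted form of "<z2 - z1, c1 z2 - c2 z1> <= 0" in terms of norms only:
   by Cauchy-Schwarz it forces c2 ||z1|| - c1 ||z2|| and ||z1|| - ||z2|| to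
   have opposite signs. *)
Lemma weighted_norm_compare u v (c1 c2 : R) : 0 <= c1 -> 0 <= c2 ->
  c1 * sqnorm2 v - (c1 + c2) * dotv u v + c2 * sqnorm2 u <= 0 ->
  (c2 * norm2 u - c1 * norm2 v) * (norm2 u - norm2 v) <= 0.
Proof.
move=> c10 c20; rewrite -!sqr_norm2.
have := ler_wpM2l (addr_ge0 c10 c20) (cauchy_schwarz u v); nra.
Qed.

Lemma l1_ge0 u : 0 <= l1norm u.
Proof. by apply: sumr_ge0 => i _. Qed.

Lemma l1_gt0 u : u != 0 -> 0 < l1norm u.
Proof.
move=> /eqP un0; rewrite lt_def l1_ge0 andbT; apply/eqP => u0; apply: un0.
apply/matrixP => i k; rewrite (ord1 k) mxE.
have /eqP := psumr_eq0P (fun i _ => normr_ge0 (u i 0)) u0 (i := i) isT.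
by rewrite normr_eq0 => /eqP.
Qed.

Lemma l1Z a u : l1norm (a *: u) = `|a| * l1norm u.
Proof. by rewrite /l1norm mulr_sumr; apply: eq_bigr => i _; rewrite mxE normrM. Qed.

Lemma l1D u v : l1norm (u + v) <= l1norm u + l1norm v.
Proof. by rewrite /l1norm -big_split; apply: ler_sum => i _; rewrite mxE ler_normD. Qed.

Lemma l1_delta (k : 'I_m) : l1norm (delta_mx k 0 : 'cV[R]_m) = 1.
Proof.
rewrite /l1norm (bigD1 k) //= big1 => [|i ik]; first by rewrite !mxE !eqxx normr1 addr0.
by rewrite !mxE (negbTE ik) normr0.
Qed.

End EuclideanVectors.

Section ScalarFacts.
Variable R : rcfType.

Lemma small_quadratic_ge0 (K y : R) :
  (forall t, 0 < t -> t < 1 -> 0 <= t ^+ 2 * K - t * y) -> y <= 0.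
Proof.
move=> quad_ge0; rewrite leNgt; apply/negP => y0.
pose C := `|K| + 1; have C0 : 0 < C by rewrite ltr_wpDl.
have D0 : 0 < y + 2 * C by rewrite addr_gt0 ?mulr_gt0.
pose t := y / (y + 2 * C).
have t0 : 0 < t by rewrite divr_gt0.
have t1 : t < 1 by rewrite ltr_pdivrMr // mul1r ltrDl mulr_gt0.
have tK : t * K <= t * C by rewrite ler_pM2l // (le_trans (ler_norm K)) ?lerDl.
have tC : t * C < y by rewrite /t mulrAC ltr_pdivrMr // ltr_pM2l //; lra.
have := quad_ge0 t t0 t1; rewrite expr2 -mulrA -mulrBr pmulr_rge0 //; lra.
Qed.

Lemma penalized_fit_mono (T : Type) (f g : T -> R) (l1 l2 : R) (t1 t2 : T) :
  0 <= l1 -> l1 < l2 ->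
  (forall t, f t1 + l1 * g t1 <= f t + l1 * g t) ->
  (forall t, f t2 + l2 * g t2 <= f t + l2 * g t) ->
  f t1 <= f t2.
Proof.
move=> l10 l12 min1 min2; have := min1 t2; have := min2 t1 => min21 min12.
have g21 : g t2 <= g t1 by nra.
nra.
Qed.

(* Reading off (c2 a - c1 b)(a - b) <= 0, the conclusion of the residual
   comparison below: with 0 < c1 <= c2 it forces a <= b ... *)
Lemma weighted_compare_le (c1 c2 a b : R) : 0 < c1 -> c1 <= c2 -> 0 <= b ->
  (c2 * a - c1 * b) * (a - b) <= 0 -> a <= b.
Proof.
move=> c10 c12 b0 h; rewrite leNgt; apply/negP => ba.
have : 0 < c2 * a - c1 * b by have := ler_wpM2r (ltW (le_lt_trans b0 ba)) c12; nra.
have : 0 < a - b by rewrite subr_gt0.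
nra.
Qed.

(* ... and with 0 <= c1 <= c2 and a, b >= 0 it forces c1 / a <= c2 / b
   (with the convention x / 0 = 0). *)
Lemma weighted_compare_ratio (c1 c2 a b : R) : 0 <= c1 -> c1 <= c2 ->
  0 <= a -> 0 <= b -> (c2 * a - c1 * b) * (a - b) <= 0 -> c1 / a <= c2 / b.
Proof.
move=> c10 c12 a0 b0 h.
have [->|an0] := eqVneq a 0; first by rewrite invr0 mulr0 divr_ge0 //; lra.
have ag : 0 < a by rewrite lt_def an0.
have [bz|bn0] := eqVneq b 0.
  have : c2 * (a * a) <= 0 by move: h; rewrite bz !(mulr0, subr0) mulrA.
  rewrite pmulr_lle0 ?mulr_gt0 // => c2le0.
  have -> : c1 = 0 by lra.
  by rewrite mul0r bz invr0 mulr0.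
have bg : 0 < b by rewrite lt_def bn0.
rewrite ler_pdivrMr // mulrAC ler_pdivlMr // leNgt; apply/negP => hh.
have ab : a < b by have := ler_wpM2r a0 c12; nra.
have : 0 < (c1 * b - c2 * a) * (b - a) by rewrite mulr_gt0 // subr_gt0.
nra.
Qed.

End ScalarFacts.

Section NodewiseLasso.
Variables (R : rcfType) (n p : nat) (X : 'M[R]_(n, p)) (j : 'I_p).
Hypothesis n_gt0 : (0 < n)%N.

Local Notation A := (col' j X).
Local Notation x := (col j X).
Local Notation z := (resid X j).

Lemma natr_n_gt0 : 0 < n%:R :> R. Proof. by rewrite ltr0n. Qed.

Definition max_corr (u : 'cV[R]_n) : R :=
  \big[Num.max/0]_(k < p | k != j) `|dotv (col k X) u|.

Lemma etajE u : etaj X j u = max_corr u / norm2 u. Proof. by []. Qed.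

Lemma col_col' k : col k A = col (lift j k) X.
Proof. by apply/matrixP => i l; rewrite !mxE. Qed.

Lemma max_corr_ge0 u : 0 <= max_corr u.
Proof. by rewrite /max_corr; elim/big_ind: _ => //= a b a0 b0; rewrite le_max a0. Qed.

Lemma max_corr_ub u k : `|dotv (col k A) u| <= max_corr u.
Proof.
by rewrite col_col' (le_bigmax_cond _ (P := fun k => k != j)) // eq_sym neq_lift.
Qed.

Lemma max_corr_le u c : 0 <= c -> (forall k, `|dotv (col k A) u| <= c) ->
  max_corr u <= c.
Proof.
move=> c0 corr_le; apply: bigmax_le => // i ij.
by case: (unliftP j i) ij => [k -> _|->]; [rewrite -col_col'|rewrite eqxx].
Qed.

Lemma dotv_mulmx_le b u : dotv (A *m b) u <= l1norm b * max_corr u.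
Proof.
have -> : dotv (A *m b) u = \sum_k b k 0 * dotv (col k A) u.
  rewrite /dotv; under eq_bigr do rewrite mxE big_distrl.
  rewrite exchange_big; apply: eq_bigr => k _; rewrite big_distrr.
  by apply: eq_bigr => i _; rewrite !mxE /=; ring.
rewrite /l1norm mulr_suml; apply: ler_sum => k _.
rewrite (le_trans (ler_norm _)) // normrM ler_wpM2l ?max_corr_ub //.
Qed.

Lemma lasso_sol_ineq lam b b' : is_lasso_sol X j lam b ->
  sqnorm2 (z b) + (2 * n)%:R * lam * l1norm b <=
  sqnorm2 (z b') + (2 * n)%:R * lam * l1norm b'.
Proof.
move=> /(_ b'); rewrite /lasso_obj.
have h2n : 0 < (2 * n)%:R :> R by rewrite ltr0n muln_gt0.
rewrite -(ler_pM2r h2n) !mulrDl !divfK ?gt_eqF //.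
by rewrite ![lam * _ * _]mulrC !mulrA.
Qed.

Lemma lasso_directional lam b (d : 'cV[R]_p.-1) (c : R) :
  0 <= lam -> is_lasso_sol X j lam b ->
  (forall t, 0 < t -> t < 1 -> l1norm (b + t *: d) <= l1norm b + t * c) ->
  dotv (A *m d) (z b) <= n%:R * lam * c.
Proof.
move=> lam0 sol l1_rate.
suff : 2 * dotv (A *m d) (z b) - 2 * (n%:R * lam * c) <= 0 by lra.
apply: (small_quadratic_ge0 (K := sqnorm2 (A *m d))) => t t0 t1.
have := lasso_sol_ineq (b + t *: d) sol.
have -> : z (b + t *: d) = z b - t *: (A *m d).
  by rewrite /resid mulmxDr -scalemxAr opprD addrA.
have w0 : 0 <= (2 * n)%:R * lam by rewrite mulr_ge0.
have := ler_wpM2l w0 (l1_rate t t0 t1).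
rewrite sqnormB natrM (dotvC (z b)); nra.
Qed.

(* KKT condition: every correlation |<x_k, z>|, k <> j, is at most lam n;
   perturb along +- the k-th basis vector. *)
Lemma lasso_corr_le lam b k : 0 <= lam -> is_lasso_sol X j lam b ->
  `|dotv (col k A) (z b)| <= lam * n%:R.
Proof.
move=> lam0 sol; have rate s t : 0 < t ->
    l1norm (b + t *: (s *: delta_mx k 0)) <= l1norm b + t * `|s|.
  move=> t0; rewrite (le_trans (l1D _ _)) // !l1Z l1_delta mulr1.
  by rewrite gtr0_norm.
have := lasso_directional lam0 sol (fun t t0 _ => rate (-1) t t0).
have := lasso_directional lam0 sol (fun t t0 _ => rate 1 t t0).
rewrite -!scalemxAr !scale1r -colE dotvZl normrN normr1.
by rewrite ler_norml; lra.
Qed.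

(* KKT condition on the fitted part, <A b, z> = n lam ||b||_1: scale b by
   1 + t and by 1 - t. *)
Lemma lasso_fit_corr lam b : 0 <= lam -> is_lasso_sol X j lam b ->
  dotv (A *m b) (z b) = n%:R * lam * l1norm b.
Proof.
move=> lam0 sol; apply/le_anti/andP; split.
  apply: lasso_directional => // t t0 _.
  by rewrite -{1}[b]scale1r -scalerDl l1Z ger0_norm ?mulrDl ?mul1r //; lra.
have rate t : 0 < t -> t < 1 -> l1norm (b + t *: - b) <= l1norm b + t * - l1norm b.
  move=> t0 t1; rewrite scalerN -{1}[b]scale1r -scalerBl l1Z ger0_norm; lra.
have := lasso_directional lam0 sol rate.
rewrite -scaleN1r -scalemxAr dotvZl; lra.
Qed.

Lemma max_corr_resid_le lam b : 0 <= lam -> is_lasso_sol X j lam b ->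
  max_corr (z b) <= lam * n%:R.
Proof.
by move=> lam0 sol; apply: max_corr_le => [|k]; [rewrite mulr_ge0|apply: lasso_corr_le].
Qed.

Lemma max_corr_resid_eq lam b : 0 <= lam -> is_lasso_sol X j lam b -> b != 0 ->
  max_corr (z b) = lam * n%:R.
Proof.
move=> lam0 sol b0; apply/le_anti; rewrite max_corr_resid_le //=.
have := dotv_mulmx_le b (z b); rewrite (lasso_fit_corr lam0 sol) => fit_le.
by rewrite -(ler_pM2l (l1_gt0 b0)); lra.
Qed.

Lemma lasso_fit_max_corr lam b : 0 <= lam -> is_lasso_sol X j lam b ->
  dotv (A *m b) (z b) = l1norm b * max_corr (z b).
Proof.
move=> lam0 sol; have [->|b0] := eqVneq b 0.
  by rewrite mulmx0 dotv0l /l1norm big1 ?mul0r // => i _; rewrite mxE normr0.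
by rewrite (max_corr_resid_eq lam0 sol b0) (lasso_fit_corr lam0 sol); ring.
Qed.

(* When the
   larger-lam solution vanishes, its residual is x_j itself, and
   <A b1, x_j> = ||A b1||^2 + n lam1 ||b1||_1 forces max_corr x_j >= lam1 n. *)
Lemma max_corr_mono l1 l2 b1 b2 : 0 <= l1 -> l1 <= l2 ->
  is_lasso_sol X j l1 b1 -> is_lasso_sol X j l2 b2 ->
  max_corr (z b1) <= max_corr (z b2).
Proof.
move=> l10 l12 sol1 sol2; have l20 : 0 <= l2 by lra.
have corr1_le := max_corr_resid_le l10 sol1.
have [b2_0|b2n0] := eqVneq b2 0; last first.
  by rewrite (max_corr_resid_eq l20 sol2 b2n0) (le_trans corr1_le) ?ler_pM2r ?natr_n_gt0.
have [b1_0|b1n0] := eqVneq b1 0; first by rewrite b1_0 b2_0.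
have z2E : z b2 = z b1 + A *m b1 by rewrite b2_0 /resid mulmx0 subr0 subrK.
have fit_x : n%:R * l1 * l1norm b1 <= dotv (A *m b1) (z b2).
  rewrite [in dotv _ (z b2)]z2E dotvDr (lasso_fit_corr l10 sol1) -sqnormE.
  by rewrite lerDl sqnorm_ge0.
have := le_trans fit_x (dotv_mulmx_le b1 (z b2)).
rewrite (max_corr_resid_eq l10 sol1 b1n0) [n%:R * l1]mulrC [_ * l1norm b1]mulrC.
by rewrite ler_pM2l ?l1_gt0.
Qed.

Lemma cross_fit_corr_le b b' e e' : 0 <= e -> 0 <= e' ->
  dotv (A *m b) (z b) = l1norm b * e -> max_corr (z b') <= e' ->
  e * dotv (A *m b) (z b') <= e' * dotv (A *m b) (z b).
Proof.
move=> e0 e0' fit corr'; rewrite fit.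
have := le_trans (dotv_mulmx_le b (z b')) (ler_wpM2l (l1_ge0 b) corr'); nra.
Qed.

(* The basic comparison of two residuals: with weights e_i bounding the
   correlations and matching the fitted correlation of each solution,
   <z2 - z1, e1 z2 - e2 z1> <= 0, hence by Cauchy-Schwarz
   (e2 ||z1|| - e1 ||z2||)(||z1|| - ||z2||) <= 0. *)
Lemma resid_compare b1 b2 e1 e2 : 0 <= e1 -> 0 <= e2 ->
  dotv (A *m b1) (z b1) = l1norm b1 * e1 -> max_corr (z b1) <= e1 ->
  dotv (A *m b2) (z b2) = l1norm b2 * e2 -> max_corr (z b2) <= e2 ->
  (e2 * norm2 (z b1) - e1 * norm2 (z b2)) * (norm2 (z b1) - norm2 (z b2)) <= 0.
Proof.
move=> e10 e20 fit1 corr1 fit2 corr2; apply: weighted_norm_compare => //.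
have := cross_fit_corr_le e10 e20 fit1 corr2.
have := cross_fit_corr_le e20 e10 fit2 corr1.
have : z b2 - z b1 = A *m b1 - A *m b2 by rewrite /resid opprB addrC addrA subrK.
set z1 := z b1; set z2 := z b2; set w1 := A *m b1; set w2 := A *m b2.
clearbody z1 z2 w1 w2 => fit_diff cross2 cross1.
have : dotv (z2 - z1) (e1 *: z2 - e2 *: z1) =
       dotv (w1 - w2) (e1 *: z2 - e2 *: z1) by rewrite fit_diff.
rewrite !dotvBl !dotvBr !dotvZr !sqnormE (dotvC z2 z1); lra.
Qed.

(* ||z_j(lam)|| is nondecreasing: compare with weights e_i = lam_i n. *)
Lemma resid_norm_mono l1 l2 b1 b2 : 0 < l1 -> l1 <= l2 ->
  is_lasso_sol X j l1 b1 -> is_lasso_sol X j l2 b2 ->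
  norm2 (z b1) <= norm2 (z b2).
Proof.
move=> l10 l12 sol1 sol2; have l20 : 0 <= l2 by lra.
have e10 : 0 < l1 * n%:R by rewrite mulr_gt0 ?natr_n_gt0.
apply: (weighted_compare_le e10 (ler_wpM2r (ler0n R n) l12) (norm2_ge0 _)).
have fit lam b : 0 <= lam -> is_lasso_sol X j lam b ->
    dotv (A *m b) (z b) = l1norm b * (lam * n%:R).
  by move=> lam0 sol; rewrite (lasso_fit_corr lam0 sol); ring.
apply: resid_compare.
- exact: ltW.
- by rewrite mulr_ge0 ?ler0n.
- exact: fit (ltW l10) sol1.
- exact: max_corr_resid_le (ltW l10) sol1.
- exact: fit l20 sol2.
- exact: max_corr_resid_le l20 sol2.
Qed.

(* eta_j(lam) is nondecreasing: compare with weights e_i = max_corr (z_i). *)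
Lemma eta_mono l1 l2 b1 b2 : 0 < l1 -> l1 <= l2 ->
  is_lasso_sol X j l1 b1 -> is_lasso_sol X j l2 b2 ->
  etaj X j (z b1) <= etaj X j (z b2).
Proof.
move=> l10 l12 sol1 sol2; have l20 : 0 <= l2 by lra.
rewrite !etajE; apply: weighted_compare_ratio; rewrite ?max_corr_ge0 ?norm2_ge0 //.
  exact: max_corr_mono (ltW l10) l12 sol1 sol2.
by apply: resid_compare; rewrite ?max_corr_ge0 ?(lasso_fit_max_corr _ sol1)
  ?(lasso_fit_max_corr _ sol2) //; lra.
Qed.

(* tau_j <= 1/||z||: indeed x_j^T z = ||z||^2 + n lam ||b||_1 >= ||z||^2. *)
Lemma tau_le lam b : 0 <= lam -> is_lasso_sol X j lam b ->
  tauj X j (z b) <= 1 / norm2 (z b).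
Proof.
move=> lam0 sol; rewrite /tauj.
have x_corr : dotv x (z b) = norm2 (z b) ^+ 2 + n%:R * lam * l1norm b.
  have -> : x = z b + A *m b by rewrite /resid subrK.
  by rewrite dotvDl (lasso_fit_corr lam0 sol) sqr_norm2 sqnormE.
have pen0 : 0 <= n%:R * lam * l1norm b by rewrite !mulr_ge0 ?ler0n ?l1_ge0.
have [->|zn0] := eqVneq (norm2 (z b)) 0; first by rewrite mul0r invr0 mulr0.
have zg : 0 < norm2 (z b) by rewrite lt_def zn0 norm2_ge0.
rewrite x_corr ger0_norm; last by rewrite addr_ge0 ?sqr_ge0.
rewrite ler_pdivrMr ?ltr_pwDl ?exprn_gt0 // mul1r mulrC ler_pdivlMr //.
by rewrite -expr2 lerDl.
Qed.

(* The scaled Lasso profiled over sigma: the optimal noise level for a given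
   b is rho b = ||z(b)|| / sqrt n, and the objective exceeds its profiled
   value rho b + lam ||b||_1 by (s - rho b)^2 / (2 s). *)
Definition rho b : R := Num.sqrt (sqnorm2 (z b) / n%:R).

Lemma sqnorm_rho b : sqnorm2 (z b) = rho b ^+ 2 * n%:R.
Proof.
rewrite sqr_sqrtr ?divfK ?gt_eqF ?natr_n_gt0 //.
by rewrite divr_ge0 ?sqnorm_ge0 ?ler0n.
Qed.

Lemma rho_eq0 b : (rho b == 0) = (z b == 0).
Proof.
rewrite sqrtr_eq0 ler_pdivrMr ?natr_n_gt0 // mul0r.
apply/idP/eqP => [z_le0|->]; last by rewrite /sqnorm2 big1 // => i _; rewrite mxE expr0n.
by apply: sqnorm_eq0; apply/le_anti; rewrite z_le0 sqnorm_ge0.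
Qed.

Lemma sl_obj_excess lam b s : sl_admissible X j b s ->
  sl_obj X j lam b s =
  rho b + lam * l1norm b + (if 0 < s then (s - rho b) ^+ 2 / (2 * s) else 0).
Proof.
case=> [s0|[-> /eqP z0]]; last first.
  have /eqP -> : rho b == 0 by rewrite rho_eq0.
  by rewrite /sl_obj ltxx add0r addr0.
rewrite /sl_obj s0 sqnorm_rho natrM; field.
by rewrite (gt_eqF s0) (gt_eqF natr_n_gt0).
Qed.

Lemma sl_admissible_rho b : sl_admissible X j b (rho b).
Proof.
have [rho0|rhon0] := eqVneq (rho b) 0; last by left; rewrite lt_def rhon0 sqrtr_ge0.
by right; split => //; apply/eqP; rewrite -rho_eq0 rho0.
Qed.

Lemma sl_obj_rho lam b : sl_obj X j lam b (rho b) = rho b + lam * l1norm b.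
Proof.
rewrite sl_obj_excess; last exact: sl_admissible_rho.
by rewrite subrr expr0n mul0r if_same addr0.
Qed.

Lemma scaled_lasso_sol_rho lam b s : is_scaled_lasso_sol X j lam b s ->
  s = rho b /\ forall b', rho b + lam * l1norm b <= rho b' + lam * l1norm b'.
Proof.
move=> [adm sl_min].
have excess0 : (if 0 < s then (s - rho b) ^+ 2 / (2 * s) else 0) = 0.
  have := sl_min b _ (sl_admissible_rho b).
  rewrite sl_obj_excess // sl_obj_rho gerDl => excess_le0.
  apply/le_anti; rewrite excess_le0 /=; case: ifP => [s0|_]; last exact: lexx.
  by rewrite divr_ge0 ?sqr_ge0 ?mulr_ge0 // ltW.
have s_rho : s = rho b.
  move: excess0; case: adm => [s0|[-> /eqP z0] _]; last first.
    by apply/esym/eqP; rewrite rho_eq0.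
  rewrite s0 => /eqP; rewrite mulf_eq0 invr_eq0 sqrf_eq0 subr_eq0 mulf_eq0 (gt_eqF s0).
  by rewrite pnatr_eq0 /= !orbF => /eqP.
split => // b'; have := sl_min b' _ (sl_admissible_rho b').
by rewrite sl_obj_rho sl_obj_excess // excess0 addr0.
Qed.

Lemma sigma_mono l1 l2 b1 b2 s1 s2 : 0 < l1 -> l1 < l2 ->
  is_scaled_lasso_sol X j l1 b1 s1 -> is_scaled_lasso_sol X j l2 b2 s2 ->
  s1 <= s2.
Proof.
move=> l10 l12 /scaled_lasso_sol_rho [-> min1] /scaled_lasso_sol_rho [-> min2].
exact: penalized_fit_mono (ltW l10) l12 min1 min2.
Qed.

End NodewiseLasso.

Theorem proposition1 (R : rcfType) (n p : nat) (X : 'M[R]_(n, p)) (j : 'I_p)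
  (Hn : (0 < n)%N)
  (Hcol : forall k : 'I_p, \sum_i X i k ^+ 2 = n%:R) :
  (* ||z_j(lam)||_2 and eta_j(lam) are nondecreasing in lam > 0 *)
  (forall (l1 l2 : R) (b1 b2 : 'cV[R]_p.-1),
      0 < l1 -> l1 <= l2 ->
      is_lasso_sol X j l1 b1 -> is_lasso_sol X j l2 b2 ->
      norm2 (resid X j b1) <= norm2 (resid X j b2) /\
      etaj X j (resid X j b1) <= etaj X j (resid X j b2)) /\
  (* sigma_hat_j(lam) is nondecreasing in lam > 0 *)
  (forall (l1 l2 : R) (b1 b2 : 'cV[R]_p.-1) (s1 s2 : R),
      0 < l1 -> l1 < l2 ->
      is_scaled_lasso_sol X j l1 b1 s1 -> is_scaled_lasso_sol X j l2 b2 s2 ->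
      s1 <= s2) /\
  (* tauj bound, and etaj formula on a nonzero solution *)
  (forall (l : R) (b : 'cV[R]_p.-1),
      0 < l -> is_lasso_sol X j l b ->
      tauj X j (resid X j b) <= 1 / norm2 (resid X j b) /\
      (b != 0 -> etaj X j (resid X j b) = l * n%:R / norm2 (resid X j b))).
Proof.
split; [|split].
- move=> l1 l2 b1 b2 l10 l12 sol1 sol2; split.
    exact: (resid_norm_mono Hn l10 l12 sol1 sol2).
  exact: (eta_mono Hn l10 l12 sol1 sol2).
- move=> l1 l2 b1 b2 s1 s2 l10 l12 sol1 sol2.
  exact: (sigma_mono Hn l10 l12 sol1 sol2).
- move=> l b l0 sol; split; first exact: (tau_le Hn (ltW l0) sol).
  by move=> b0; rewrite etajE (max_corr_resid_eq Hn (ltW l0) sol b0).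
Qed.
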